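(* Let $d\ge2$, let $\mathfrak{F}$ be an ordered field or a field that has more than two elements, and let $\mathcal{G}$ be a field-definable coordinate geometry over $\mathfrak{F}$ (of dimension $d$). Then $$\mathrm{Aut}(\mathcal{G})=\mathrm{AffAut}(\mathcal{G})\circ\mathrm{Aut}_{\mathrm{ind}}(\mathfrak{F})=\{A\circ\widetilde{\alpha}: A\in\mathrm{AffAut}(\mathcal{G}),\ \alpha\in\mathrm{Aut}(\mathfrak{F})\}.$$ Moreover, for each automorphism $g$ of $\mathcal{G}$, the decomposition $g=A\circ\widetilde{\alpha}$ with $A\in\mathrm{AffAut}(\mathcal{G})$ and $\widetilde{\alpha}\in\mathrm{Aut}_{\mathrm{ind}}(\mathfrak{F})$ is unique.
   Context: A field is $\langle F,+,\cdot,0,1\rangle$; an ordered field is $\langle F,+,\cdot,0,1,\le\rangle$. ''Definable'' means first-order definable without parameters. For points of $F^d$: ${\mathsf{Col}}(\vec p,\vec q,\vec r)$ iff $\vec q=\vec p+\lambda(\vec r-\vec p)$ for some $\lambda\in F$ or $\vec r=\vec p$; for an ordered field, ${\mathsf{Bw}}(\vec p,\vec q,\vec r)$ iff $\vec q=\vec p+\lambda(\vec r-\vec p)$ for some $\lambda\in F$ with $0\le\lambda\le1$. An $n$-ary relation on $F^d$ is definable over $\mathfrak{F}$ iff the corresponding $dn$-ary relation on $F$ obtained by listing coordinates of the $n$ points consecutively is definable in $\mathfrak{F}$. A coordinate geometry over a field (resp. ordered field) $\mathfrak{F}$ is a model with universe $F^d$, only relation symbols in its language, in which ${\mathsf{Col}}$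 (resp. ${\mathsf{Bw}}$) is definable; it is field-definable if all its relations are definable over $\mathfrak{F}$. An affine transformation of $F^d$ is an invertible linear map followed by a translation; $\mathrm{AffAut}(\mathcal{G})$ is the set of automorphisms of $\mathcal{G}$ that are affine transformations. For a map $f:F\to F$, $\widetilde f:F^d\to F^d$ is $\widetilde f(\langle p_1,\dots,p_d\rangle)=\langle f(p_1),\dots,f(p_d)\rangle$, and $\mathrm{Aut}_{\mathrm{ind}}(\mathfrak{F})=\{\widetilde\alpha:\alpha\in\mathrm{Aut}(\mathfrak{F})\}$. *)

From HB Require Import structures.
From mathcomp Require Import all_boot all_order all_algebra.
Set Implicit Arguments. Unset Strict Implicit. Unset Printing Implicit Defensive.
Import Order.TTheory GRing.Theory Num.Theory.
Local Open Scope ring_scope.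

(* We encode "a field or an ordered field" as
   a field F together with [ord : option (F -> F -> Prop)]:
   None = the pure field language <F,+,.,0,1>,
   Some le = the ordered field language <F,+,.,0,1,<=>. *)
Definition is_field_order (F : fieldType) (le : F -> F -> Prop) : Prop :=
  (forall x, le x x) /\
  (forall x y, le x y -> le y x -> x = y) /\
  (forall x y z, le x y -> le y z -> le x z) /\
  (forall x y, le x y \/ le y x) /\
  (forall x y z, le x y -> le (x + z) (y + z)) /\
  (forall x y, le 0 x -> le 0 y -> le 0 (x * y)).

Inductive fterm : Type :=
| FVar of nat | FZero | FOne | FAdd of fterm & fterm | FMul of fterm & fterm.

Inductive fform : Type :=
| FEq of fterm & fterm
| FLe of fterm & fterm
| FNot of fform
| FAnd of fform & fform
| FEx of nat & fform.

Fixpoint fterm_eval (F : fieldType) (e : nat -> F) (t : fterm) : F :=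
  match t with
  | FVar k => e k
  | FZero => 0
  | FOne => 1
  | FAdd t1 t2 => fterm_eval e t1 + fterm_eval e t2
  | FMul t1 t2 => fterm_eval e t1 * fterm_eval e t2
  end.

Definition upd (T : Type) (e : nat -> T) (k : nat) (x : T) : nat -> T :=
  fun j => if j == k then x else e j.

(* In the pure field language (ord = None) the symbol <= is absent; an atom
   [FLe] is then interpreted as False, which does not change the class of
   definable relations (False is definable by 0 = 1). *)
Fixpoint fholds (F : fieldType) (ord : option (F -> F -> Prop))
    (e : nat -> F) (phi : fform) : Prop :=
  match phi with
  | FEq t1 t2 => fterm_eval e t1 = fterm_eval e t2
  | FLe t1 t2 => match ord with
                 | Some le => le (fterm_eval e t1) (fterm_eval e t2)
                 | None => False
                 end
  | FNot p => ~ fholds ord e p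
  | FAnd p q => fholds ord e p /\ fholds ord e q
  | FEx k p => exists x : F, fholds ord (upd e k x) p
  end.

Notation point F d := 'rV[F]_d.

(* An n-ary relation on F^d is definable over the (ordered) field iff the
   dn-ary relation on F obtained by listing the coordinates of the n points
   consecutively is definable without parameters: variable i*d+j holds the
   j-th coordinate of the i-th point. *)
Definition field_definable (F : fieldType) (ord : option (F -> F -> Prop))
    (d n : nat) (R : ('I_n -> point F d) -> Prop) : Prop :=
  exists phi : fform, forall e : nat -> F,
    fholds ord e phi <-> R (fun i : 'I_n => \row_(j < d) e (i * d + j)%N).

Definition Col (F : fieldType) (d : nat) (p q r : point F d) : Prop :=
  (exists lam : F, q = p + lam *: (r - p)) \/ r = p.

Definition Bw (F : fieldType) (le : F -> F -> Prop) (d : nat)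
    (p q r : point F d) : Prop :=
  exists lam : F, [/\ le 0 lam, le lam 1 & q = p + lam *: (r - p)].

Definition basic_rel (F : fieldType) (ord : option (F -> F -> Prop)) (d : nat)
    (p q r : point F d) : Prop :=
  match ord with None => Col p q r | Some le => Bw le p q r end.

(* A structure G with universe F^d whose language consists only of relation
   symbols, indexed by I, symbol i having arity ar i and interpretation R i. *)
Inductive gform (I : Type) (ar : I -> nat) : Type :=
| GRel (i : I) of ('I_(ar i) -> nat)
| GEq of nat & nat
| GNot of gform ar
| GAnd of gform ar & gform ar
| GEx of nat & gform ar.

Fixpoint gholds (U I : Type) (ar : I -> nat) (R : forall i, ('I_(ar i) -> U) -> Prop)
    (e : nat -> U) (phi : gform ar) : Prop :=
  match phi with
  | GRel i v => R i (fun k => e (v k))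
  | GEq a b => e a = e b
  | GNot p => ~ gholds R e p
  | GAnd p q => gholds R e p /\ gholds R e q
  | GEx k p => exists x : U, gholds R (upd e k x) p
  end.

Definition geom_definable3 (U I : Type) (ar : I -> nat)
    (R : forall i, ('I_(ar i) -> U) -> Prop) (T : U -> U -> U -> Prop) : Prop :=
  exists phi : gform ar, forall e : nat -> U, gholds R e phi <-> T (e 0%N) (e 1%N) (e 2%N).

Definition field_definable_coord_geom (F : fieldType) (ord : option (F -> F -> Prop))
    (d : nat) (I : Type) (ar : I -> nat)
    (R : forall i, ('I_(ar i) -> point F d) -> Prop) : Prop :=
  geom_definable3 R (@basic_rel F ord d) /\
  (forall i, field_definable ord (R i)).

Definition geom_aut (U I : Type) (ar : I -> nat)
    (R : forall i, ('I_(ar i) -> U) -> Prop) (g : U -> U) : Prop :=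
  bijective g /\ (forall i (x : 'I_(ar i) -> U), R i x <-> R i (fun k => g (x k))).

Definition affine_transf (F : fieldType) (d : nat) (A : point F d -> point F d) : Prop :=
  exists (M : 'M[F]_d) (b : point F d), M \in unitmx /\ forall p, A p = p *m M + b.

Definition aff_aut (F : fieldType) (d : nat) (I : Type) (ar : I -> nat)
    (R : forall i, ('I_(ar i) -> point F d) -> Prop) (A : point F d -> point F d) : Prop :=
  affine_transf A /\ geom_aut R A.

Definition field_aut (F : fieldType) (ord : option (F -> F -> Prop)) (a : F -> F) : Prop :=
  bijective a /\ a 0 = 0 /\ a 1 = 1 /\
  (forall x y, a (x + y) = a x + a y) /\
  (forall x y, a (x * y) = a x * a y) /\
  (match ord with
   | Some le => forall x y, le x y <-> le (a x) (a y)
   | None => True end).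

Definition tilde (F : fieldType) (d : nat) (a : F -> F) (p : point F d) : point F d :=
  \row_(j < d) a (p 0 j).

(* An automorphism g of G preserves the definable relation Col (over an ordered
   field, Col is a disjunction of three betweenness relations).  The
   fundamental theorem of affine geometry then makes x |-> g x - g 0
   semilinear: it is additive on independent vectors because the fourth vertex
   of a parallelogram is Col-definable as soon as lines have three points, and
   the scalars with g (t u) = alpha t * g u form a field automorphism alpha.
   Over an ordered field, alpha maps the unit interval, read off betweenness,
   into itself, hence is monotone.  So g = A o alpha~ with A affine, and A is
   an automorphism of G because alpha~ preserves every field-definable
   relation.  The decomposition is unique: A is determined by the images of 0
   and of the unit vectors, and then alpha by the diagonal. *)

From HB Require Import structures.
From mathcomp Require Import all_boot all_order all_algebra ring.
From Stdlib Require Import FunctionalExtensionality ClassicalEpsilon Classical.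
Set Implicit Arguments. Unset Strict Implicit. Unset Printing Implicit Defensive.
Import GRing.Theory.
Local Open Scope ring_scope.

Section Independence.
Variables (F : fieldType) (d : nat).
Local Notation V := 'rV[F]_d.

Definition indep2 (u v : V) := forall a b : F, a *: u + b *: v = 0 -> a = 0 /\ b = 0.

Lemma scaler_eq0_coef (a : F) (v : V) : v <> 0 -> a *: v = 0 -> a = 0.
Proof. by move=> v0 /eqP; rewrite scaler_eq0 => /orP [/eqP //| /eqP /v0]. Qed.

Lemma Col0_scale (y p : V) : p <> 0 -> Col 0 y p -> exists l, y = l *: p.
Proof. by move=> p0 [[l ->]|//]; exists l; rewrite add0r subr0. Qed.

Lemma indep2_sym u v : indep2 u v -> indep2 v u.
Proof. by move=> uv a b; rewrite addrC => /uv []. Qed.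

Lemma indep2_neq0l u v : indep2 u v -> u <> 0.
Proof.
move=> uv u0; have [] := uv 1 0; first by rewrite u0 scaler0 scale0r addr0.
by move/eqP; rewrite oner_eq0.
Qed.

Lemma indep2_neq0r u v : indep2 u v -> v <> 0.
Proof. by move/indep2_sym/indep2_neq0l. Qed.

Lemma indep2_Col u v : indep2 u v <-> ~ Col 0 v u.
Proof.
split=> [uv [[l E]|u0]|nCol a b E].
- have [|_ /eqP] := uv l (-1); first by rewrite E add0r subr0 scaleN1r subrr.
  by rewrite oppr_eq0 oner_eq0.
- exact: indep2_neq0l uv u0.
- have u0 : u <> 0 by move=> u0; apply: nCol; right.
  have b0 : b = 0.
    apply/eqP/negP => /negP b0; apply: nCol; left; exists (- (a / b)).
    apply: (scalerI b0); rewrite add0r subr0 scalerA mulrN mulrCA mulfV // mulr1.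
    by rewrite scaleNr; apply/eqP; rewrite -addr_eq0 addrC E.
  by split=> //; apply: (scaler_eq0_coef u0); rewrite -E b0 scale0r addr0.
Qed.

Lemma indep2_scale u v a b : indep2 u v -> a != 0 -> b != 0 -> indep2 (a *: u) (b *: v).
Proof.
move=> uv a0 b0 x y; rewrite !scalerA => /uv [/eqP + /eqP].
by rewrite !mulf_eq0 (negbTE a0) (negbTE b0) !orbF => /eqP -> /eqP ->.
Qed.

Lemma indep2_addl u v : indep2 u v -> indep2 u (u + v).
Proof. by move=> uv a b; rewrite scalerDr addrA -scalerDl => /uv [+ b0]; rewrite b0 addr0. Qed.

Lemma indep2_delta (i j : 'I_d) : i != j -> indep2 'e_i 'e_j.
Proof.
move=> ij a b /rowP E; have := E i; have := E j.
by rewrite !mxE !eqxx eq_sym (negbTE ij) /= !mulr0 !mulr1 add0r addr0.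
Qed.

End Independence.

Section Parallel.
Variables (F : fieldType) (d : nat).
Local Notation V := 'rV[F]_d.

(* x is on the line through q parallel to 0p: the second conjunct says that the
   lines 0p and qx do not meet, the first one forces x into the plane 0pq. *)
Definition on_parallel (p q x : V) :=
  (exists y z, [/\ y <> z, Col 0 y p, Col 0 z q & Col y x z]) /\
  (forall y, ~ (Col 0 y p /\ Col q y x)).

Lemma on_parallelP p q x : indep2 p q -> on_parallel p q x -> exists s, x = q + s *: p.
Proof.
move=> pq; have p0 := indep2_neq0l pq; have q0 := indep2_neq0r pq.
case=> [[y [z [yz /(Col0_scale p0) [l ey] /(Col0_scale q0) [k ez] [[m ex]|zy]]]] disj];
  last by case: (yz (esym zy)).
subst x y z.
have [mk1|mk1] := eqVneq (m * k) 1.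
  exists (l - m * l); apply/rowP => j; rewrite !mxE.
  by transitivity (l * p 0 j + (m * k) * q 0 j - m * l * p 0 j); [ring | rewrite mk1; ring].
have mk1' : 1 - m * k != 0 by rewrite subr_eq0 eq_sym.
exfalso; apply: (disj (((1 - m * k)^-1 * l * (1 - m)) *: p)); split.
  by left; exists ((1 - m * k)^-1 * l * (1 - m)); rewrite add0r subr0.
by left; exists (1 - m * k)^-1; apply/rowP => j; rewrite !mxE; field.
Qed.

Variable mu : F.
Hypotheses (mu0 : mu != 0) (mu1 : mu != 1).

Lemma on_parallel_add p q : indep2 p q -> on_parallel p q (p + q).
Proof.
move=> pq; have p0 := indep2_neq0l pq.
have mu1' : 1 - mu != 0 by rewrite subr_eq0 eq_sym.
split.
  (* p + q = (1 - mu) y + mu z *)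
  exists ((1 - mu)^-1 *: p), (mu^-1 *: q); split.
  - move=> yz; have [|_ /eqP] := pq (1 - mu)^-1 (- mu^-1).
      by rewrite scaleNr yz subrr.
    by rewrite oppr_eq0 invr_eq0 (negbTE mu0).
  - by left; exists (1 - mu)^-1; rewrite add0r subr0.
  - by left; exists mu^-1; rewrite add0r subr0.
  - by left; exists mu; apply/rowP => j; rewrite !mxE; field; rewrite mu1' mu0.
move=> y [/(Col0_scale p0) [l ->]] [[b E]|E].
  have [|_ /eqP] := pq (l - b) (-1); last by rewrite oppr_eq0 oner_eq0.
  by rewrite -(subrr (l *: p)) {2}E; apply/rowP => j; rewrite !mxE; ring.
by apply: p0; apply: (addIr q); rewrite add0r.
Qed.

End Parallel.

Section CollinearityPreserving.
Variables (F : fieldType) (d : nat) (g g' : 'rV[F]_d -> 'rV[F]_d).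
Local Notation V := 'rV[F]_d.
Hypotheses (gK : cancel g g') (g'K : cancel g' g) (g0 : g 0 = 0).
Hypothesis g_Col : forall p q r, Col p q r <-> Col (g p) (g q) (g r).

Let g_inj : injective g := can_inj gK.
Let Col_map p q r : Col p q r -> Col (g p) (g q) (g r). Proof. by case: (g_Col p q r). Qed.
Let Col_mapV p q r : Col (g p) (g q) (g r) -> Col p q r. Proof. by case: (g_Col p q r). Qed.

Lemma map_neq0 v : v <> 0 -> g v <> 0.
Proof. by move=> v0 gv0; apply/v0/g_inj; rewrite gv0 g0. Qed.

Lemma indep2_map u v : indep2 u v -> indep2 (g u) (g v).
Proof. by move=> /indep2_Col nCol; apply/indep2_Col; rewrite -g0 => /Col_mapV. Qed.

Lemma on_parallel_map p q x : on_parallel p q x -> on_parallel (g p) (g q) (g x).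
Proof.
case=> [[y [z [yz yp zq yxz]]] disj]; rewrite /on_parallel -g0; split.
  by exists (g y), (g z); split; [move/g_inj | apply: Col_map ..].
by move=> w; rewrite -[w]g'K => -[/Col_mapV wp /Col_mapV qwx]; apply: (disj (g' w)).
Qed.

Variable mu : F.
Hypotheses (mu0 : mu != 0) (mu1 : mu != 1).

(* g (p + q) is the fourth vertex of the parallelogram on 0, g p, g q. *)
Lemma map_add_indep p q : indep2 p q -> g (p + q) = g p + g q.
Proof.
move=> pq; have gpq := indep2_map pq.
have [s Es] := on_parallelP gpq (on_parallel_map (on_parallel_add mu0 mu1 pq)).
have [t Et] := on_parallelP (indep2_sym gpq)
  (on_parallel_map (on_parallel_add mu0 mu1 (indep2_sym pq))).
rewrite addrC in Et.
have [|/eqP + _] := gpq (s - 1) (1 - t).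
  by rewrite -(subrr (g (p + q))) {1}Es Et; apply/rowP => j; rewrite !mxE; ring.
by rewrite subr_eq0 => /eqP s1; rewrite Es s1 scale1r addrC.
Qed.

Lemma map_scale_ex v t : v <> 0 -> exists l, g (t *: v) = l *: g v.
Proof.
move=> v0; have : Col 0 (t *: v) v by left; exists t; rewrite add0r subr0.
by move/Col_map; rewrite g0; apply: Col0_scale (map_neq0 v0).
Qed.

Lemma map_scale_transfer (a : F -> F) u v :
  (forall t, g (t *: u) = a t *: g u) -> indep2 u v ->
  forall t, g (t *: v) = a t *: g v.
Proof.
move=> gu uv t; have u0 := indep2_neq0l uv; have v0 := indep2_neq0r uv.
have [->|t0] := eqVneq t 0.
  have a0 : a 0 = 0 by apply: (scaler_eq0_coef (map_neq0 u0)); rewrite -gu scale0r g0.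
  by rewrite a0 !scale0r g0.
have [l El] := map_scale_ex t (indep2_neq0r (indep2_addl uv)).
have [k Ek] := map_scale_ex t v0.
have E := map_add_indep (indep2_scale uv t0 t0).
rewrite -scalerDr El gu Ek !map_add_indep // in E.
have guv := indep2_map uv; have [|/eqP + /eqP] := guv (a t - l) (k - l).
  by rewrite -(subrr (a t *: g u + k *: g v)) -{2}E; apply/rowP => j; rewrite !mxE; ring.
by rewrite !subr_eq0 Ek => /eqP -> /eqP ->.
Qed.

Variables (u1 u2 : V).
Hypothesis u12 : indep2 u1 u2.

Definition alpha (t : F) : F :=
  proj1_sig (constructive_indefinite_description _ (map_scale_ex t (indep2_neq0l u12))).

Lemma alphaP t : g (t *: u1) = alpha t *: g u1.
Proof. by rewrite /alpha; case: constructive_indefinite_description. Qed.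

Lemma alpha_unique t l : g (t *: u1) = l *: g u1 -> alpha t = l.
Proof.
rewrite alphaP => /eqP; rewrite -subr_eq0 -scalerBl => /eqP.
by move/(scaler_eq0_coef (map_neq0 (indep2_neq0l u12)))/eqP; rewrite subr_eq0 => /eqP.
Qed.

Lemma map_scale v t : g (t *: v) = alpha t *: g v.
Proof.
have [->|v0] := eqVneq v 0; first by rewrite !scaler0 g0 scaler0.
have [uv|] := classic (indep2 u1 v); first exact: map_scale_transfer alphaP uv t.
rewrite indep2_Col => /NNPP /(Col0_scale (indep2_neq0l u12)) [c vE].
have c0 : c != 0 by apply: contra_neq v0 => c0; rewrite vE c0 scale0r.
have u2v : indep2 u2 v.
  by rewrite vE -[u2]scale1r; exact: indep2_scale (indep2_sym u12) (oner_neq0 F) c0.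
exact: map_scale_transfer (map_scale_transfer alphaP u12) u2v t.
Qed.

Let u1_neq0 : u1 <> 0 := indep2_neq0l u12.

Lemma alpha0 : alpha 0 = 0.
Proof. by apply: alpha_unique; rewrite !scale0r g0. Qed.

Lemma alpha1 : alpha 1 = 1.
Proof. by apply: alpha_unique; rewrite !scale1r. Qed.

Lemma alphaM s t : alpha (s * t) = alpha s * alpha t.
Proof. by apply: alpha_unique; rewrite -scalerA map_scale alphaP scalerA. Qed.

Lemma alpha_inj : injective alpha.
Proof.
move=> s t st; have /g_inj/eqP : g (s *: u1) = g (t *: u1) by rewrite !alphaP st.
rewrite -subr_eq0 -scalerBl => /eqP /(scaler_eq0_coef u1_neq0) /eqP.
by rewrite subr_eq0 => /eqP.
Qed.

Lemma alpha_surj l : exists t, alpha t = l.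
Proof.
have : Col (g 0) (g (g' (l *: g u1))) (g u1) by rewrite g0 g'K; left; exists l; rewrite add0r subr0.
move/Col_mapV/(Col0_scale u1_neq0) => [t Et]; exists t.
by apply: alpha_unique; rewrite -Et g'K.
Qed.

Lemma map_lincomb2 a b u v : indep2 u v -> g (a *: u + b *: v) = alpha a *: g u + alpha b *: g v.
Proof.
move=> uv; rewrite -!map_scale.
have [->|a0] := eqVneq a 0; first by rewrite scale0r g0 !add0r.
have [->|b0] := eqVneq b 0; first by rewrite scale0r g0 !addr0.
exact/map_add_indep/indep2_scale.
Qed.

Lemma alphaD s t : alpha (s + t) = alpha s + alpha t.
Proof.
have E : g ((s + t) *: u1 + t *: u2) = g (s *: u1 + t *: (u1 + u2)).
  by congr g; apply/rowP => j; rewrite !mxE; ring.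
have u1u12 := indep2_addl u12.
rewrite !map_lincomb2 // map_add_indep // in E.
have gu12 := indep2_map u12; have [|/eqP + _] := gu12 (alpha (s + t) - alpha s - alpha t) 0.
  rewrite -(subrr (alpha (s + t) *: g u1 + alpha t *: g u2)) {2}E.
  by apply/rowP => j; rewrite !mxE; ring.
by rewrite -addrA -opprD subr_eq0 => /eqP.
Qed.

Lemma map_add : {morph g : x y / x + y}.
Proof.
move=> x y; have [->|x0] := eqVneq x 0; first by rewrite g0 !add0r.
have [xy|] := classic (indep2 x y); first exact: map_add_indep.
rewrite indep2_Col => /NNPP /(Col0_scale (elimN eqP x0)) [c ->].
by rewrite -{1}[x]scale1r -scalerDl !map_scale alphaD alpha1 scalerDl scale1r.
Qed.

Lemma map_semilinear x : g x = tilde alpha x *m \matrix_j g 'e_j.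
Proof.
rewrite mulmx_sum_row {1}[x]row_sum_delta (big_morph g map_add g0).
by apply: eq_bigr => j _; rewrite map_scale rowK mxE.
Qed.

End CollinearityPreserving.

Lemma Col_subr (F : fieldType) d (p q r c : 'rV[F]_d) :
  Col (p - c) (q - c) (r - c) <-> Col p q r.
Proof.
have E (x y : 'rV[F]_d) : x - c - (y - c) = x - y by rewrite opprB addrA subrK.
rewrite /Col E; split=> [[[l El]|/addIr ->]|[[l El]|->]]; [left|by right|left|by right].
  by exists l; apply: (addIr (- c)); rewrite El addrAC.
by exists l; rewrite El addrAC.
Qed.

Lemma inj_surj_bij (A B : Type) (f : A -> B) :
  injective f -> (forall y, exists x, f x = y) -> bijective f.
Proof.
move=> f_inj f_surj.
pose f' y := proj1_sig (constructive_indefinite_description _ (f_surj y)).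
have f'K : cancel f' f by move=> y; rewrite /f'; case: constructive_indefinite_description.
by exists f' => // x; apply: f_inj; rewrite f'K.
Qed.

Theorem Col_preserving_semiaffine (F : fieldType) (d : nat) (g : 'rV[F]_d -> 'rV[F]_d) (mu : F) :
  (2 <= d)%N -> mu != 0 -> mu != 1 -> bijective g ->
  (forall p q r, Col p q r <-> Col (g p) (g q) (g r)) ->
  exists a M, [/\ field_aut None a, M \in unitmx & forall x, g x = tilde a x *m M + g 0].
Proof.
move=> d2 mu0 mu1 [g' gK g'K] g_Col.
pose h x := g x - g 0; pose h' y := g' (y + g 0).
have hK : cancel h h' by move=> x; rewrite /h /h' subrK gK.
have h'K : cancel h' h by move=> y; rewrite /h /h' g'K addrK.
have h0 : h 0 = 0 by rewrite /h subrr.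
have h_Col p q r : Col p q r <-> Col (h p) (h q) (h r).
  by apply: (iff_trans (g_Col p q r)); rewrite Col_subr.
have u12 : indep2 ('e_(Ordinal (ltnW d2)) : 'rV[F]_d) 'e_(Ordinal d2) by apply: indep2_delta.
pose a := alpha hK h0 h_Col u12.
have h_semilinear := map_semilinear hK h'K h0 h_Col mu0 mu1 u12.
exists a, (\matrix_j h 'e_j); split.
- split; first by apply: inj_surj_bij (alpha_surj hK h'K h0 h_Col u12) => s t /alpha_inj.
  split; first exact: alpha0.
  split; first exact: alpha1.
  split; first exact (alphaD hK h'K h0 h_Col mu0 mu1 u12).
  by split; first exact (alphaM hK h'K h0 h_Col mu0 mu1 u12).
- rewrite -row_full_unit; apply/row_fullP.
  exists (\matrix_i tilde a (h' 'e_i)); apply/row_matrixP => i.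
  by rewrite row_mul !rowK -h_semilinear h'K row1.
- by move=> x; rewrite -h_semilinear /h subrK.
Qed.

Section OrderedField.
Variables (F : fieldType) (le : F -> F -> Prop).
Hypothesis Hle : is_field_order le.

Let le_refl : forall x, le x x := proj1 Hle.
Let le_anti : forall x y, le x y -> le y x -> x = y := proj1 (proj2 Hle).
Let le_trans : forall x y z, le x y -> le y z -> le x z := proj1 (proj2 (proj2 Hle)).
Let le_total : forall x y, le x y \/ le y x := proj1 (proj2 (proj2 (proj2 Hle))).
Let le_add2r : forall x y z, le x y -> le (x + z) (y + z) :=
  proj1 (proj2 (proj2 (proj2 (proj2 Hle)))).
Let mul_ge0 : forall x y, le 0 x -> le 0 y -> le 0 (x * y) :=
  proj2 (proj2 (proj2 (proj2 (proj2 Hle)))).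

Lemma le_subr_ge0 x y : le x y -> le 0 (y - x).
Proof. by move=> xy; rewrite -(subrr x); apply: le_add2r. Qed.

Lemma subr_ge0_le x y : le 0 (y - x) -> le x y.
Proof. by move/(le_add2r x); rewrite add0r subrK. Qed.

Lemma add_ge0_ord x y : le 0 x -> le 0 y -> le 0 (x + y).
Proof. by move=> x0 y0; apply: le_trans y0 _; have := le_add2r y x0; rewrite add0r. Qed.

Lemma ler01_ord : le 0 1.
Proof.
have [//|/le_subr_ge0] := le_total 0 1; rewrite sub0r => N1.
by have := mul_ge0 N1 N1; rewrite mulrNN mulr1.
Qed.

Lemma ler10_ord : ~ le 1 0.
Proof. by move/le_anti/(_ ler01_ord)/eqP; rewrite oner_eq0. Qed.

Lemma addr1_neq0_ord x : le 0 x -> 1 + x != 0.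
Proof.
move=> x0; apply/eqP => x1; apply: ler10_ord.
by have := le_add2r 1 x0; rewrite add0r addrC x1.
Qed.

Lemma invr_ge0_ord x : le 0 x -> le 0 x^-1.
Proof.
move=> x0; have [->|xn0] := eqVneq x 0; first by rewrite invr0.
have [//|/le_subr_ge0] := le_total 0 x^-1; rewrite sub0r => Nxi.
have := mul_ge0 x0 Nxi; rewrite mulrN mulfV // => N1.
by case: ler10_ord; apply: subr_ge0_le; rewrite sub0r.
Qed.

Lemma ge0_unit_interval z : le 0 z <-> exists l, [/\ le 0 l, le l 1 & l * (1 + z) = 1].
Proof.
split=> [z0|[l [l0 l1 E]]].
  have z1 := addr1_neq0_ord z0; have z1_ge0 := add_ge0_ord ler01_ord z0.
  exists (1 + z)^-1; split; [exact: invr_ge0_ord | | exact: mulVf].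
  apply: subr_ge0_le; have -> : 1 - (1 + z)^-1 = z * (1 + z)^-1 by field.
  exact/mul_ge0/invr_ge0_ord.
have ln0 : l != 0 by apply: contra_eq_neq E => ->; rewrite mul0r eq_sym oner_neq0.
have -> : z = (1 - l) * l^-1 by rewrite -E; field.
exact/mul_ge0/invr_ge0_ord/l0/le_subr_ge0.
Qed.

Section UnitIntervalPreserving.
Variable phi : F -> F.
Hypotheses (phi1 : phi 1 = 1) (phiD : {morph phi : x y / x + y}).
Hypothesis phiM : {morph phi : x y / x * y}.
Hypothesis phi_unit : forall t, le 0 t -> le t 1 -> le 0 (phi t) /\ le (phi t) 1.

Lemma unit_interval_ge0 z : le 0 z -> le 0 (phi z).
Proof.
move/ge0_unit_interval=> [l [l0 l1 E]]; have [pl0 pl1] := phi_unit l0 l1.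
by apply/ge0_unit_interval; exists (phi l); split; rewrite // -phi1 -phiD -phiM E.
Qed.

Lemma unit_interval_le x y : le x y -> le (phi x) (phi y).
Proof.
move/le_subr_ge0/unit_interval_ge0 => pyx; apply: subr_ge0_le.
by have := phiD (y - x) x; rewrite subrK => ->; rewrite addrK.
Qed.

Lemma unit_interval_mono : injective phi -> forall x y, le x y <-> le (phi x) (phi y).
Proof.
move=> phi_inj x y; split; first exact: unit_interval_le.
have [//|yx pxy] := le_total x y.
by rewrite (phi_inj _ _ (le_anti pxy (unit_interval_le yx))).
Qed.

End UnitIntervalPreserving.

Lemma Col_Bw d (p q r : 'rV[F]_d) :
  Col p q r <-> [\/ Bw le p q r, Bw le q p r | Bw le p r q].
Proof.
split=> [[[l ->]|->]|[[l [_ _ ->]]|[l [_ _ E]]|[l [_ _ E]]]].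
- have [l0|/le_subr_ge0] := le_total 0 l; last first.
    rewrite sub0r => Nl0; have l1 := addr1_neq0_ord Nl0.
    have l1_ge0 := add_ge0_ord ler01_ord Nl0.
    apply: Or32; exists (- l / (1 - l)); split.
    + exact/mul_ge0/invr_ge0_ord.
    + apply: subr_ge0_le; have -> : 1 - - l / (1 - l) = (1 - l)^-1 by field.
      exact: invr_ge0_ord.
    + by apply/rowP => j; rewrite !mxE; field.
  have [l1|/le_subr_ge0 l1] := le_total l 1; first by apply: Or31; exists l.
  have ln0 : l != 0.
    by apply: contra_not_neq ler10_ord => leq0; move: l1; rewrite leq0 => /subr_ge0_le.
  apply: Or33; exists l^-1; split.
  + exact: invr_ge0_ord.
  + apply: subr_ge0_le; have -> : 1 - l^-1 = (l - 1) * l^-1 by field.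
    exact/mul_ge0/invr_ge0_ord.
  + by apply/rowP => j; rewrite !mxE; field.
- apply: Or32; exists 1; split; [exact: ler01_ord | exact: le_refl |].
  by rewrite scale1r addrC subrK.
- by left; exists l.
- have [l1|l1] := eqVneq l 1; first by right; rewrite E l1 scale1r addrC subrK.
  have l1' : 1 - l != 0 by rewrite subr_eq0 eq_sym.
  left; exists (- l / (1 - l)); apply/rowP => j.
  by have /rowP/(_ j) := E; rewrite !mxE => ->; field.
- have [l0|ln0] := eqVneq l 0; first by right; rewrite E l0 scale0r addr0.
  by left; exists l^-1; rewrite E; apply/rowP => j; rewrite !mxE; field.
Qed.

End OrderedField.

Lemma Bw_const (F : fieldType) (le : F -> F -> Prop) d (i : 'I_d) t :
  Bw le (const_mx 0 : 'rV[F]_d) (const_mx t) (const_mx 1) <-> le 0 t /\ le t 1.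
Proof.
split=> [[l [l0 l1 /rowP/(_ i)]]|[t0 t1]]; first by rewrite !mxE subr0 add0r mulr1 => ->.
by exists t; split=> //; apply/rowP => j; rewrite !mxE subr0 add0r mulr1.
Qed.

Lemma Bw_affine (F : fieldType) (le : F -> F -> Prop) d (M : 'M[F]_d) (c p q r : 'rV[F]_d) :
  M \in unitmx -> Bw le (p *m M + c) (q *m M + c) (r *m M + c) <-> Bw le p q r.
Proof.
move=> Mu; have affE l :
    (p + l *: (r - p)) *m M + c = p *m M + c + l *: (r *m M + c - (p *m M + c)).
  by rewrite mulmxDl -scalemxAl mulmxBl; apply/rowP => j; rewrite !mxE; ring.
have aff_inj : injective (fun x => x *m M + c).
  by move=> x y /addIr /(congr1 (mulmx^~ (invmx M))); rewrite !mulmxK.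
by split=> -[l [l0 l1 E]]; exists l; split=> //; [apply: aff_inj; rewrite /= affE | rewrite E affE].
Qed.

Lemma map_upd (U W : Type) (f : U -> W) (e : nat -> U) k x :
  (fun n => f (upd e k x n)) = upd (fun n => f (e n)) k (f x).
Proof. by apply: functional_extensionality => n; rewrite /upd; case: (n == k). Qed.

Section GeometryAutomorphisms.
Variables (U I : Type) (ar : I -> nat) (R : forall i, ('I_(ar i) -> U) -> Prop).

Lemma gholds_geom_aut g : geom_aut R g ->
  forall phi e, gholds R e phi <-> gholds R (fun n => g (e n)) phi.
Proof.
case=> [[g' gK g'K] gR]; elim=> [i v|a b|p IH|p IHp q IHq|k p IH] e /=.
- exact: gR.
- by split=> [->|/(can_inj gK)].
- by rewrite IH.
- by rewrite IHp IHq.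
- split=> [[x Hx]|[x Hx]]; first by exists (g x); rewrite -map_upd -IH.
  by exists (g' x); rewrite IH map_upd g'K.
Qed.

Lemma geom_aut_definable3 g (T : U -> U -> U -> Prop) : geom_aut R g -> geom_definable3 R T ->
  forall p q r, T p q r <-> T (g p) (g q) (g r).
Proof.
move=> g_aut [phi phiT] p q r.
pose e n := match n with 0 => p | 1 => q | _ => r end.
by rewrite -(phiT e) -(phiT (fun n => g (e n))) -gholds_geom_aut.
Qed.

Lemma geom_aut_comp f g : geom_aut R f -> geom_aut R g -> geom_aut R (f \o g).
Proof.
move=> [f_bij fR] [g_bij gR]; split; first exact: bij_comp.
by move=> i x; apply: iff_trans (gR i x) (fR i _).
Qed.

Lemma geom_aut_inv g g' : cancel g g' -> cancel g' g -> geom_aut R g -> geom_aut R g'.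
Proof.
move=> gK g'K [_ gR]; split=> [|i x]; first by exists g.
rewrite (gR i (fun k => g' (x k))); suff -> : (fun k => g (g' (x k))) = x by [].
by apply: functional_extensionality => k; rewrite g'K.
Qed.

Lemma geom_aut_ext f g : geom_aut R f -> f =1 g -> geom_aut R g.
Proof. by move=> + /functional_extensionality <-. Qed.

End GeometryAutomorphisms.

Section FieldAutomorphisms.
Variables (F : fieldType) (ord : option (F -> F -> Prop)) (a : F -> F).
Hypothesis a_aut : field_aut ord a.

Lemma fterm_eval_aut e t : fterm_eval (fun n => a (e n)) t = a (fterm_eval e t).
Proof.
case: a_aut => _ [a0 [a1 [aD [aM _]]]].
by elim: t => [n|||t1 IH1 t2 IH2|t1 IH1 t2 IH2] //=; rewrite ?IH1 ?IH2 ?aD ?aM.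
Qed.

Lemma fholds_aut phi e : fholds ord e phi <-> fholds ord (fun n => a (e n)) phi.
Proof.
case: a_aut => [[b ab ba] [_ [_ [_ [_ a_mono]]]]].
elim: phi e => [t1 t2|t1 t2|p IH|p IHp q IHq|k p IH] e /=.
- by rewrite !fterm_eval_aut; split=> [->|/(can_inj ab)].
- by rewrite !fterm_eval_aut; case: ord a_mono.
- by rewrite IH.
- by rewrite IHp IHq.
- split=> [[x Hx]|[x Hx]]; first by exists (a x); rewrite -map_upd -IH.
  by exists (b x); rewrite IH map_upd ba.
Qed.

Variable d : nat.

(* Inverse of the coordinate encoding used in [field_definable]. *)
Definition coord_env n (x : 'I_n -> 'rV[F]_d) (m : nat) : F :=
  if insub (m %/ d)%N is Some i then
    if insub (m %% d)%N is Some j then x i 0 j else 0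
  else 0.

Lemma coord_envE n (x : 'I_n -> 'rV[F]_d) (i : 'I_n) (j : 'I_d) :
  coord_env x (i * d + j) = x i 0 j.
Proof.
have d_gt0 : (0 < d)%N by case: d j => [[]|].
by rewrite /coord_env divnMDl // divn_small // addn0 modnMDl modn_small // !valK.
Qed.

Lemma field_definable_tilde n (T : ('I_n -> 'rV[F]_d) -> Prop) :
  field_definable ord T -> forall x, T x <-> T (fun k => tilde a (x k)).
Proof.
move=> [phi phiT] x.
have -> : (fun k => tilde a (x k)) = (fun i => \row_(j < d) a (coord_env x (i * d + j))).
  by apply: functional_extensionality => i; apply/rowP => j; rewrite !mxE coord_envE.
rewrite -(phiT (fun m => a (coord_env x m))) -fholds_aut phiT.
suff -> : (fun i : 'I_n => \row_(j < d) coord_env x (i * d + j)) = x by [].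
by apply: functional_extensionality => i; apply/rowP => j; rewrite mxE coord_envE.
Qed.

End FieldAutomorphisms.

Section Tilde.
Variables (F : fieldType) (d : nat).
Local Notation V := 'rV[F]_d.

Lemma tildeK (a b : F -> F) : cancel a b -> cancel (@tilde F d a) (tilde b).
Proof. by move=> ab p; apply/rowP => j; rewrite !mxE ab. Qed.

Lemma tilde_const (a : F -> F) t : tilde a (const_mx t : V) = const_mx (a t).
Proof. by apply/rowP => j; rewrite !mxE. Qed.

Lemma tilde0 (a : F -> F) : a 0 = 0 -> tilde a (0 : V) = 0.
Proof. by move=> a0; apply/rowP => j; rewrite !mxE a0. Qed.

Lemma tilde_delta (a : F -> F) j : a 0 = 0 -> a 1 = 1 -> tilde a ('e_j : V) = 'e_j.
Proof.
by move=> a0 a1; apply/rowP => k; rewrite !mxE eqxx /=; case: (k == j); rewrite ?mulr1n ?mulr0n.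
Qed.

Lemma tilde_geom_aut ord (I : Type) (ar : I -> nat) (R : forall i, ('I_(ar i) -> V) -> Prop) a :
  field_aut ord a -> (forall i, field_definable ord (R i)) -> geom_aut R (tilde a).
Proof.
move=> a_aut R_def; have [[b ab ba] _] := a_aut; split; first by exists (tilde b); apply: tildeK.
by move=> i; exact (field_definable_tilde a_aut (R_def i)).
Qed.

Lemma semiaffine_unique (i : 'I_d) (A1 A2 : V -> V) (a1 a2 : F -> F) :
  affine_transf A1 -> affine_transf A2 ->
  a1 0 = 0 -> a1 1 = 1 -> a2 0 = 0 -> a2 1 = 1 ->
  (forall p, A1 (tilde a1 p) = A2 (tilde a2 p)) ->
  (forall p, A1 p = A2 p) /\ (forall x, a1 x = a2 x).
Proof.
move=> [M1 [c1 [_ A1E]]] [M2 [c2 [M2u A2E]]] a10 a11 a20 a21 E.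
have ec : c1 = c2 by have := E 0; rewrite A1E A2E !tilde0 // !mul0mx !add0r.
have eM : M1 = M2.
  apply/row_matrixP => j; have := E 'e_j.
  by rewrite A1E A2E !tilde_delta // ec -!rowE => /addIr.
have eA p : A1 p = A2 p by rewrite A1E A2E ec eM.
split=> // x; have := E (const_mx x); rewrite eA !A2E => /addIr /(congr1 (mulmx^~ (invmx M2))).
by rewrite !mulmxK // !tilde_const => /rowP /(_ i); rewrite !mxE.
Qed.

End Tilde.

Definition admissible (F : fieldType) (ord : option (F -> F -> Prop)) :=
  (exists le, ord = Some le /\ is_field_order le) \/
  (ord = None /\ exists a b c : F, [/\ a <> b, a <> c & b <> c]).

Section AdmissibleField.
Variables (F : fieldType) (ord : option (F -> F -> Prop)).
Hypothesis ord_adm : admissible ord.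

Lemma admissible_nontrivial : exists mu : F, mu != 0 /\ mu != 1.
Proof.
case: ord_adm => [[le [_ le_ord]]|[_ [a [b [c [ab ac bc]]]]]].
  exists (1 + 1); split; first exact (addr1_neq0_ord le_ord (ler01_ord le_ord)).
  by apply/eqP => /(congr1 (fun x => x - 1)); rewrite addrK subrr; apply/eqP; rewrite oner_eq0.
have [a01|] := boolP ((a != 0) && (a != 1)); first by exists a; apply/andP.
have [b01|] := boolP ((b != 0) && (b != 1)); first by exists b; apply/andP.
by rewrite !negb_and !negbK => /orP[]/eqP eb /orP[]/eqP ea; exists c; split;
  apply/eqP => ec; congruence.
Qed.

Variable d : nat.
Local Notation V := 'rV[F]_d.

Lemma admissible_Col (g : V -> V) :
  (forall p q r, basic_rel ord p q r <-> basic_rel ord (g p) (g q) (g r)) ->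
  forall p q r, Col p q r <-> Col (g p) (g q) (g r).
Proof.
case: ord_adm => [[le [-> le_ord]]|[-> _]] //= gB p q r.
have gBV p' q' r' : Bw le (g p') (g q') (g r') -> Bw le p' q' r' by case: (gB p' q' r').
split=> /(Col_Bw le_ord) Hc; apply/(Col_Bw le_ord).
  by case: Hc => /gB; [apply: Or31 | apply: Or32 | apply: Or33].
by case: Hc => /gBV; [apply: Or31 | apply: Or32 | apply: Or33].
Qed.

Lemma admissible_field_aut (i : 'I_d) (g : V -> V) a M c :
  (forall p q r, basic_rel ord p q r <-> basic_rel ord (g p) (g q) (g r)) ->
  field_aut None a -> M \in unitmx -> (forall x, g x = tilde a x *m M + c) ->
  field_aut ord a.
Proof.
case: ord_adm => [[le [-> le_ord]]|[-> _]] //= gB.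
move=> [[b ab ba] [a0 [a1 [aD [aM _]]]]] Mu gE; split; first by exists b.
do 4 (split=> //).
have a_unit t : le 0 t -> le t 1 -> le 0 (a t) /\ le (a t) 1.
  move=> t0 t1; have /gB : Bw le (const_mx 0 : V) (const_mx t) (const_mx 1).
    by apply/(Bw_const _ i).
  by rewrite !gE Bw_affine // !tilde_const a0 a1 => /(Bw_const _ i).
exact (unit_interval_mono le_ord a1 aD aM a_unit (can_inj ab)).
Qed.

End AdmissibleField.

Section CoordinateGeometry.
Variables (F : fieldType) (ord : option (F -> F -> Prop)) (d : nat).
Variables (I : Type) (ar : I -> nat) (R : forall i, ('I_(ar i) -> 'rV[F]_d) -> Prop).
Hypothesis R_geom : field_definable_coord_geom ord R.

Lemma semiaffine_geom_aut A a :
  aff_aut R A -> field_aut ord a -> geom_aut R (fun p => A (tilde a p)).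
Proof. by move=> [_ A_aut] a_aut; apply: geom_aut_comp A_aut (tilde_geom_aut a_aut R_geom.2). Qed.

Lemma geom_aut_semiaffine g : admissible ord -> (2 <= d)%N -> geom_aut R g ->
  exists A a, [/\ aff_aut R A, field_aut ord a & forall p, g p = A (tilde a p)].
Proof.
move=> ord_adm d2 g_aut; have gB := geom_aut_definable3 g_aut R_geom.1.
have [mu [mu0 mu1]] := admissible_nontrivial ord_adm.
have [a [M [a_field Mu gE]]] :=
  Col_preserving_semiaffine d2 mu0 mu1 g_aut.1 (admissible_Col ord_adm gB).
have a_aut := admissible_field_aut ord_adm (Ordinal d2) gB a_field Mu gE.
have [[b ab ba] _] := a_aut.
exists (fun p => p *m M + g 0), a; split=> //; split; first by exists M, (g 0).
apply (geom_aut_ext (geom_aut_comp g_aut (geom_aut_inv (tildeK ab) (tildeK ba)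
  (tilde_geom_aut a_aut R_geom.2)))) => p /=.
by rewrite gE tildeK.
Qed.

End CoordinateGeometry.

Theorem proposition4 (F : fieldType) (ord : option (F -> F -> Prop)) :
  (* F is an ordered field, or a field with more than two elements *)
  ((exists le, ord = Some le /\ is_field_order le) \/
   (ord = None /\ exists a b c : F, [/\ a <> b, a <> c & b <> c])) ->
  forall (d : nat), (2 <= d)%N ->
  forall (I : Type) (ar : I -> nat) (R : forall i, ('I_(ar i) -> 'rV[F]_d) -> Prop),
    field_definable_coord_geom ord R ->
    (* Aut(G) = AffAut(G) o Aut_ind(F) *)
    (forall g : 'rV[F]_d -> 'rV[F]_d,
        geom_aut R g <->
        exists (A : 'rV[F]_d -> 'rV[F]_d) (a : F -> F),
          [/\ aff_aut R A, field_aut ord a & forall p, g p = A (tilde a p)]) /\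
    (* uniqueness of the decomposition *)
    (forall (A1 A2 : 'rV[F]_d -> 'rV[F]_d) (a1 a2 : F -> F),
        aff_aut R A1 -> aff_aut R A2 -> field_aut ord a1 -> field_aut ord a2 ->
        (forall p, A1 (tilde a1 p) = A2 (tilde a2 p)) ->
        (forall p, A1 p = A2 p) /\ (forall x, a1 x = a2 x)).
Proof.
move=> ord_adm d d2 I ar R R_geom; split.
  move=> g; split; first exact: geom_aut_semiaffine.
  move=> [A [a [A_aut a_aut gE]]].
  by apply (geom_aut_ext (semiaffine_geom_aut R_geom A_aut a_aut)) => p; rewrite gE.
move=> A1 A2 a1 a2 [A1_aff _] [A2_aff _] [_ [a10 [a11 _]]] [_ [a20 [a21 _]]].
exact (semiaffine_unique (Ordinal d2) A1_aff A2_aff a10 a11 a20 a21).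
Qed.
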